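(* Let $M$ be a positive integer and let $K$ be an integer with $q_{KL}-1\le K\le M$. Then for every $q\in\mathcal U(M)\cap(1,K+1]$, the quasi-greedy expansion $\alpha(q)=(\alpha_i(q))$ satisfies \[M-K\le\alpha_i(q)\le K\quad\text{for all }i\ge1.\]
   Context: For a positive integer $J$, $\mathcal U(J)$ is the set of $q\in(1,J+1]$ such that $1$ has exactly one expansion $1=\sum_{i\ge1}d_iq^{-i}$ with $d_i\in\{0,1,\dots,J\}$. For $q\in(1,M+1]$, $\alpha(q)=\alpha_1(q)\alpha_2(q)\dots$ is the quasi-greedy $q$-expansion of $1$ over the alphabet $\{0,1,\dots,M\}$, i.e. the lexicographically largest sequence $(a_i)\in\{0,\dots,M\}^{\mathbb N}$ not ending in $0^\infty$ with $\sum a_iq^{-i}=1$. Let $(\tau_i)_{i\ge0}$ be the Thue–Morse sequence ($\tau_0=0$, $\tau_{2^n}\dots\tau_{2^{n+1}-1}=(1-\tau_0)\dots(1-\tau_{2^n-1})$); $q_{KL}=q_{KL}(M)$ is the base with $\alpha(q_{KL})=\lambda_1\lambda_2\dots$, $\lambda_i=k+\tau_i-\tau_{i-1}$ if $M=2k$, $\lambda_i=k+\tau_i$ if $M=2k+1$. *)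

From Stdlib Require Import Reals Arith Lia.
Open Scope R_scope.

(* Sequences of digits are functions nat -> nat; only indices i >= 1 are
   meaningful (d i = d_i); the value at index 0 is ignored. *)

Definition expansion (J : nat) (q : R) (d : nat -> nat) : Prop :=
  (forall i, (1 <= i)%nat -> (d i <= J)%nat) /\
  infinite_sum (fun n => INR (d (S n)) / q ^ (S n)) 1.

Definition in_U (J : nat) (q : R) : Prop :=
  1 < q <= INR J + 1 /\
  (exists d, expansion J q d) /\
  (forall d d', expansion J q d -> expansion J q d' ->
     forall i, (1 <= i)%nat -> d i = d' i).

Definition not_ending_in_zeros (d : nat -> nat) : Prop :=
  forall n, exists i, (n < i)%nat /\ d i <> 0%nat.

Definition lex_le (b a : nat -> nat) : Prop :=
  (forall i, (1 <= i)%nat -> b i = a i) \/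
  (exists n, (1 <= n)%nat /\
     (forall i, (1 <= i)%nat -> (i < n)%nat -> b i = a i) /\ (b n < a n)%nat).

Definition quasi_greedy (M : nat) (q : R) (a : nat -> nat) : Prop :=
  expansion M q a /\ not_ending_in_zeros a /\
  (forall b, expansion M q b -> not_ending_in_zeros b -> lex_le b a).

(* Thue--Morse sequence, following the block definition:
   tau_0 = 0 and, for 2^k <= n < 2^(k+1), tau_n = 1 - tau_(n - 2^k). *)
Fixpoint tau_aux (fuel n : nat) : nat :=
  match fuel with
  | O => 0%nat
  | S f => match n with
           | O => 0%nat
           | _ => (1 - tau_aux f (n - 2 ^ Nat.log2 n))%nat
           end
  end.
Definition tau (n : nat) : nat := tau_aux n n.

Definition lambdaKL (M : nat) (i : nat) : nat :=
  let k := Nat.div2 M in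
  if Nat.even M then (k + tau i - tau (i - 1))%nat else (k + tau i)%nat.

Definition is_qKL (M : nat) (q : R) : Prop :=
  1 < q <= INR M + 1 /\ quasi_greedy M q (lambdaKL M).

From Stdlib Require Import Reals Arith Lia Lra ClassicalEpsilon.
From Coquelicot Require Import Coquelicot.
Open Scope R_scope.

(* Let T_n = sum_{i>=1} a_{n+i} q^{-i} be the tails of the unique expansion,
   so that T_0 = 1, 0 < T_n <= M/(q-1) and a_{n+1} = q T_n - T_{n+1}.  Since
   every number of [0, M/(q-1)] has an expansion (greedy algorithm), uniqueness
   forbids moving one unit between the digit a_{n+1} and the tail behind it:
   T_{n+1} < 1 if a_{n+1} < M, and T_{n+1} > M/(q-1) - 1 if a_{n+1} > 0.
   Feeding these bounds into a_{n+1} = q T_n - T_{n+1} with q <= K+1 gives, by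
   induction on n, a_{n+1} < q <= K+1 and a_{n+1} > M - q >= M - K - 1. *)

Lemma Rinv_gt1_bounds q : 1 < q -> 0 < / q < 1.
Proof.
  intros Hq. split; [apply Rinv_0_lt_compat; lra|].
  rewrite <- Rinv_1. apply Rinv_1_lt_contravar; lra.
Qed.

Lemma Rabs_inv_lt_1 q : 1 < q -> Rabs (/ q) < 1.
Proof.
  intros Hq. destruct (Rinv_gt1_bounds q Hq). rewrite Rabs_pos_eq; lra.
Qed.

Lemma is_lim_seq_bounded_div_pow q B r : 1 < q -> (forall n, 0 <= r n <= B) ->
  is_lim_seq (fun n => r n / q ^ n) 0.
Proof.
  intros Hq Hr.
  apply (is_lim_seq_le_le (fun _ => 0) _ (fun n => B * (/ q) ^ n)).
  - intros n. destruct (Hr n). unfold Rdiv. rewrite <- pow_inv.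
    assert (0 <= (/ q) ^ n) by (apply pow_le; destruct (Rinv_gt1_bounds q Hq); lra).
    split; [apply Rmult_le_pos | apply Rmult_le_compat_r]; lra.
  - apply is_lim_seq_const.
  - replace (Finite 0) with (Rbar_mult B 0) by (simpl; f_equal; ring).
    apply is_lim_seq_scal_l, is_lim_seq_geom, Rabs_inv_lt_1, Hq.
Qed.

Lemma INR_lt_plus_1 m K : INR m < INR K + 1 -> (m <= K)%nat.
Proof. intros H. apply Nat.lt_succ_r, INR_lt. rewrite S_INR. exact H. Qed.

Lemma nat_floor_capped (N : nat) (y : R) : 0 <= y ->
  exists c, (c <= N)%nat /\ INR c <= y /\ (c = N \/ y < INR c + 1).
Proof.
  intros Hy. induction N as [|N [c [HcN [Hcy [Hc | Hc]]]]].
  - exists 0%nat. simpl. repeat split; auto.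
  - subst c. destruct (Rle_lt_dec (INR (S N)) y) as [HS | HS].
    + exists (S N). auto.
    + exists N. rewrite S_INR in HS. repeat split; auto.
  - exists c. repeat split; auto.
Qed.

Definition digits_le (M : nat) (d : nat -> nat) : Prop :=
  forall i, (1 <= i)%nat -> (d i <= M)%nat.

Definition digit_term (q : R) (d : nat -> nat) (k : nat) : R :=
  INR (d (S k)) / q ^ S k.

Definition qvalue (q : R) (d : nat -> nat) : R := Series (digit_term q d).

Definition tail (n : nat) (d : nat -> nat) : nat -> nat := fun i => d (n + i)%nat.

Definition cons_digit (c : nat) (e : nat -> nat) : nat -> nat :=
  fun i => match i with 0%nat => 0%nat | 1%nat => c | S j => e j end.

Section QValue.

Variables (M : nat) (q : R).
Hypothesis q_gt1 : 1 < q.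

Lemma is_series_geom_digits :
  is_series (fun k => INR M / q * (/ q) ^ k) (INR M / (q - 1)).
Proof.
  pose proof (is_series_scal_l (INR M / q) _ _ (is_series_geom _ (Rabs_inv_lt_1 q q_gt1)))
    as H.
  replace (INR M / (q - 1)) with (INR M / q * / (1 - / q)) by (field; lra).
  exact H.
Qed.

Lemma digit_term_bounds d :
  digits_le M d -> forall k, 0 <= digit_term q d k <= INR M / q * (/ q) ^ k.
Proof.
  intros Hd k. unfold digit_term.
  assert (Hpow : 0 < q ^ S k) by (apply pow_lt; lra).
  split.
  - apply Rdiv_le_0_compat; [apply pos_INR | lra].
  - rewrite pow_inv.
    replace (INR M / q * / q ^ k) with (INR M / q ^ S k)
      by (simpl; field; split; [apply pow_nonzero|]; lra).
    apply Rmult_le_compat_r; [left; apply Rinv_0_lt_compat; lra|].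
    apply le_INR, Hd; lia.
Qed.

Lemma ex_series_digit_term d : digits_le M d -> ex_series (digit_term q d).
Proof.
  intros Hd.
  apply (@ex_series_le R_AbsRing R_CompleteNormedModule _
           (fun k => INR M / q * (/ q) ^ k)).
  - intros k. destruct (digit_term_bounds d Hd k).
    unfold norm; simpl; unfold abs; simpl. rewrite Rabs_pos_eq; lra.
  - eexists; apply is_series_geom_digits.
Qed.

Lemma qvalue_bounds d : digits_le M d -> 0 <= qvalue q d <= INR M / (q - 1).
Proof.
  intros Hd. unfold qvalue. split.
  - assert (H0 : Series (fun _ => 0) = 0).
    { rewrite (Series_ext _ (fun k => 0 * digit_term q d k)) by (intros; ring).
      rewrite Series_scal_l; ring. }
    rewrite <- H0. apply Series_le; [|now apply ex_series_digit_term].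
    intros k. destruct (digit_term_bounds d Hd k); lra.
  - rewrite <- (is_series_unique _ _ is_series_geom_digits).
    apply Series_le; [now apply digit_term_bounds|].
    eexists; apply is_series_geom_digits.
Qed.

Lemma qvalue_tail_S d n : digits_le M d ->
  qvalue q (tail n d) = (INR (d (S n)) + qvalue q (tail (S n) d)) / q.
Proof.
  intros Hd. unfold qvalue at 1.
  rewrite Series_incr_1 by (apply ex_series_digit_term; intros i Hi; apply Hd; lia).
  rewrite (Series_ext _ (fun k => / q * digit_term q (tail (S n) d) k)).
  - rewrite Series_scal_l.
    change (Series (digit_term q (tail (S n) d))) with (qvalue q (tail (S n) d)).
    unfold digit_term, tail at 1. rewrite Nat.add_1_r, pow_1. field. lra.
  - intros k. unfold digit_term, tail. simpl.
    replace (n + S (S k))%nat with (S (n + S k)) by lia.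
    field. split; [apply pow_nonzero|]; lra.
Qed.

Lemma qvalue_S d : digits_le M d ->
  qvalue q d = (INR (d 1%nat) + qvalue q (tail 1 d)) / q.
Proof. intros Hd. exact (qvalue_tail_S d 0 Hd). Qed.

Lemma qvalue_cons c e : (c <= M)%nat -> digits_le M e ->
  qvalue q (cons_digit c e) = (INR c + qvalue q e) / q.
Proof.
  intros Hc He.
  rewrite qvalue_S by (intros [|[|i]] Hi; simpl; [lia | exact Hc | apply He; lia]).
  reflexivity.
Qed.

Lemma qvalue_pos d i : digits_le M d -> d (S i) <> 0%nat -> 0 < qvalue q d.
Proof.
  revert d. induction i as [|i IH]; intros d Hd Hi;
    rewrite qvalue_S by exact Hd;
    assert (Htail : digits_le M (tail 1 d)) by (intros j Hj; apply Hd; lia);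
    destruct (qvalue_bounds _ Htail).
  - assert (1 <= INR (d 1%nat)) by (apply (le_INR 1); lia).
    apply Rdiv_lt_0_compat; lra.
  - specialize (IH (tail 1 d) Htail Hi). pose proof (pos_INR (d 1%nat)).
    apply Rdiv_lt_0_compat; lra.
Qed.

Lemma expansion_iff d : expansion M q d <-> digits_le M d /\ qvalue q d = 1.
Proof.
  split.
  - intros [Hd Hsum]. split; [exact Hd|].
    apply is_series_unique. now apply is_series_Reals.
  - intros [Hd Hval]. split; [exact Hd|].
    apply is_series_Reals. rewrite <- Hval.
    apply Series_correct, ex_series_digit_term, Hd.
Qed.

End QValue.


Section GreedyExpansion.

Variables (M : nat) (q : R).
Hypotheses (q_gt1 : 1 < q) (q_le : q <= INR M + 1).

Let B := INR M / (q - 1).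

Lemma greedy_step r : 0 <= r <= B ->
  exists c r', (c <= M)%nat /\ 0 <= r' <= B /\ q * r = INR c + r'.
Proof.
  intros Hr.
  assert (HB1 : 1 <= B).
  { unfold B. apply (Rmult_le_reg_r (q - 1)); [lra|].
    unfold Rdiv. rewrite Rmult_assoc, Rinv_l; lra. }
  assert (HqB : q * B = INR M + B) by (unfold B; field; lra).
  destruct (nat_floor_capped M (q * r)) as [c [HcM [Hcr Hc]]]; [nra|].
  exists c, (q * r - INR c). repeat split; [exact HcM | lra | | lra].
  destruct Hc as [-> | Hc]; nra.
Qed.

Lemma qvalue_surjective x : 0 <= x <= B ->
  exists e, digits_le M e /\ qvalue q e = x.
Proof.
  intros Hx.
  destruct (choice (fun r (p : nat * R) => 0 <= r <= B ->
      (fst p <= M)%nat /\ 0 <= snd p <= B /\ q * r = INR (fst p) + snd p))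
    as [step Hstep].
  { intros r. destruct (excluded_middle_informative (0 <= r <= B)) as [Hr | Hr].
    - destruct (greedy_step r Hr) as [c [r' H]]. now exists (c, r').
    - exists (0%nat, 0). tauto. }
  set (rem n := Nat.iter n (fun r => snd (step r)) x).
  set (e i := match i with 0%nat => 0%nat | S n => fst (step (rem n)) end).
  assert (Hrem : forall n, 0 <= rem n <= B).
  { induction n as [|n IH]; [exact Hx | apply (proj1 (proj2 (Hstep _ IH)))]. }
  assert (Hdigit : forall n, INR (e (S n)) = q * rem n - rem (S n)).
  { intros n. pose proof (proj2 (proj2 (Hstep _ (Hrem n)))). simpl; lra. }
  assert (He : digits_le M e).
  { intros [|n] Hn; [lia | apply (proj1 (Hstep _ (Hrem n)))]. }
  assert (Hpartial :
    forall n, sum_f_R0 (digit_term q e) n = x - rem (S n) / q ^ S n).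
  { intros n. unfold digit_term. induction n as [|n IH]; cbn [sum_f_R0].
    - rewrite Hdigit. change (rem 0%nat) with x. field. lra.
    - rewrite IH, Hdigit. change (q ^ S (S n)) with (q * q ^ S n).
      field. split; [apply pow_nonzero|]; lra. }
  exists e. split; [exact He|].
  apply is_series_unique.
  assert (Hrem_lim : is_lim_seq (fun n => rem (S n) / q ^ S n) 0).
  { apply (is_lim_seq_incr_1 (fun n => rem n / q ^ n)).
    exact (is_lim_seq_bounded_div_pow q B rem q_gt1 Hrem). }
  pose proof (is_lim_seq_minus' _ _ _ _ (is_lim_seq_const x) Hrem_lim) as Hlim.
  rewrite Rminus_0_r in Hlim.
  apply (is_lim_seq_ext _ _ _
    (fun n => eq_trans (eq_sym (Hpartial n)) (eq_sym (sum_n_Reals _ n)))) in Hlim.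
  exact Hlim.
Qed.

End GreedyExpansion.

Section UniqueExpansion.

Variables (M : nat) (q : R) (a : nat -> nat).
Hypotheses (q_gt1 : 1 < q) (q_le : q <= INR M + 1).
Hypotheses (a_digits : digits_le M a) (a_value : qvalue q a = 1)
  (a_nonzero : not_ending_in_zeros a)
  (a_unique : forall e, digits_le M e -> qvalue q e = 1 ->
     forall i, (1 <= i)%nat -> e i = a i).

Let B := INR M / (q - 1).
Let T n := qvalue q (tail n a).

Lemma tail_qvalue_0 : T 0 = 1.
Proof. exact a_value. Qed.

Lemma tail_digits n : digits_le M (tail n a).
Proof. intros i Hi. apply a_digits. lia. Qed.

Lemma tail_qvalue_bounds n : 0 < T n <= B.
Proof.
  split; [|apply (qvalue_bounds M q q_gt1), tail_digits].
  destruct (a_nonzero n) as [j [Hj Hne]].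
  apply (qvalue_pos M q q_gt1 _ (j - S n) (tail_digits n)).
  unfold tail. replace (n + S (j - S n))%nat with j by lia. exact Hne.
Qed.

Lemma digit_eq_tail_qvalue n : INR (a (S n)) = q * T n - T (S n).
Proof.
  unfold T. rewrite (qvalue_tail_S M q q_gt1 a n a_digits). field. lra.
Qed.

Lemma tail_unique n e : digits_le M e -> qvalue q e = T n ->
  forall j, (1 <= j)%nat -> e j = a (n + j)%nat.
Proof.
  revert e. induction n as [|n IH]; intros e He Hval j Hj.
  - apply a_unique; [exact He | now rewrite Hval, tail_qvalue_0 | exact Hj].
  - assert (Hcons : qvalue q (cons_digit (a (S n)) e) = T n).
    { rewrite (qvalue_cons M q q_gt1 _ _ (a_digits (S n) ltac:(lia)) He), Hval,
        digit_eq_tail_qvalue.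
      field. lra. }
    assert (Hcons_digits : digits_le M (cons_digit (a (S n)) e)).
    { intros [|[|i]] Hi; [lia | apply a_digits; lia | apply He; lia]. }
    destruct j as [|j]; [lia|].
    replace (S n + S j)%nat with (n + S (S j))%nat by lia.
    exact (IH _ Hcons_digits Hcons (S (S j)) ltac:(lia)).
Qed.

Lemma digit_determined n c r : (c <= M)%nat -> 0 <= r <= B ->
  INR c + r = INR (a (S n)) + T (S n) -> c = a (S n).
Proof.
  intros Hc Hr Hsum.
  destruct (qvalue_surjective M q q_gt1 q_le r Hr) as [e [He Hval]].
  assert (Hcons : qvalue q (cons_digit c e) = T n).
  { rewrite (qvalue_cons M q q_gt1 _ _ Hc He), Hval, Hsum, digit_eq_tail_qvalue.
    field. lra. }
  assert (Hcons_digits : digits_le M (cons_digit c e)).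
  { intros [|[|i]] Hi; [lia | exact Hc | apply He; lia]. }
  rewrite <- Nat.add_1_r.
  exact (tail_unique n _ Hcons_digits Hcons 1 (le_n 1)).
Qed.

Lemma tail_qvalue_lt_1 n : (a (S n) < M)%nat -> T (S n) < 1.
Proof.
  intros Ha. apply Rnot_le_lt. intros HT.
  pose proof (tail_qvalue_bounds (S n)).
  assert (Hc : S (a (S n)) = a (S n)).
  { apply (digit_determined n _ (T (S n) - 1)); [lia | unfold B in *; lra |].
    rewrite S_INR. ring. }
  lia.
Qed.

Lemma tail_qvalue_gt_pred_bound n : (0 < a (S n))%nat -> B - 1 < T (S n).
Proof.
  intros Ha. apply Rnot_le_lt. intros HT.
  pose proof (tail_qvalue_bounds (S n)).
  assert (Hc : (a (S n) - 1)%nat = a (S n)).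
  { pose proof (a_digits (S n) ltac:(lia)).
    apply (digit_determined n _ (T (S n) + 1)); [lia | unfold B in *; lra |].
    rewrite minus_INR by lia. simpl. ring. }
  lia.
Qed.

Lemma digits_le_of_base_le K : (K < M)%nat -> q <= INR K + 1 ->
  forall n, (a (S n) <= K)%nat.
Proof.
  intros HKM HqK.
  assert (Hdigit : forall n, T n <= 1 -> (a (S n) <= K)%nat).
  { intros n HTn. apply INR_lt_plus_1. rewrite digit_eq_tail_qvalue.
    pose proof (tail_qvalue_bounds (S n)). nra. }
  induction n as [|n IH]; apply Hdigit.
  - apply Req_le, tail_qvalue_0.
  - left. apply tail_qvalue_lt_1. lia.
Qed.

Lemma digits_ge_of_base_le K : (K < M)%nat -> q <= INR K + 1 ->
  forall n, (M - K <= a (S n))%nat.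
Proof.
  intros HKM HqK.
  assert (Hdigit : forall n, B - 1 < T n -> (M - K <= a (S n))%nat).
  { intros n HTn. apply INR_lt_plus_1. rewrite minus_INR, digit_eq_tail_qvalue by lia.
    pose proof (tail_qvalue_bounds (S n)).
    assert (HqB : q * B - B = INR M) by (unfold B; field; lra).
    nra. }
  induction n as [|n IH].
  - destruct (Nat.eq_dec (a 1%nat) M) as [HaM | HaM]; [lia|].
    apply Hdigit.
    assert (HT1 : T 1%nat < 1).
    { apply tail_qvalue_lt_1. pose proof (a_digits 1%nat (le_n 1)). lia. }
    assert (Ha1 : (0 < a 1%nat)%nat).
    { apply (INR_lt 0). rewrite digit_eq_tail_qvalue, tail_qvalue_0. simpl. lra. }
    pose proof (tail_qvalue_gt_pred_bound 0 Ha1). rewrite tail_qvalue_0. lra.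
  - apply Hdigit, tail_qvalue_gt_pred_bound. lia.
Qed.

End UniqueExpansion.

Theorem lemma7p1 (M K : nat) (qKL : R) :
  (0 < M)%nat -> is_qKL M qKL ->
  qKL - 1 <= INR K -> (K <= M)%nat ->
  forall q : R, in_U M q -> q <= INR K + 1 ->
  forall a : nat -> nat, quasi_greedy M q a ->
  forall i : nat, (1 <= i)%nat -> (M - K <= a i)%nat /\ (a i <= K)%nat.
Proof.
  intros _ _ _ HKM q [[Hq1 HqM] [_ Hunique]] HqK a [Ha [Hnonzero _]] i Hi.
  apply (expansion_iff M q Hq1 a) in Ha as [Hdigits Hvalue].
  destruct (Nat.eq_dec K M) as [-> | HKM'].
  { pose proof (Hdigits i Hi). lia. }
  assert (Ha_unique : forall e, digits_le M e -> qvalue q e = 1 ->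
            forall j, (1 <= j)%nat -> e j = a j).
  { intros e He Hve. apply Hunique; apply (expansion_iff M q Hq1); auto. }
  destruct i as [|n]; [lia|].
  split.
  - apply (digits_ge_of_base_le M q a Hq1 HqM Hdigits Hvalue Hnonzero Ha_unique K);
      [lia | exact HqK].
  - apply (digits_le_of_base_le M q a Hq1 HqM Hdigits Hvalue Hnonzero Ha_unique K);
      [lia | exact HqK].
Qed.
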